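(* Consider a wave sequence $U_L\xrightarrow{C}U_M\xrightarrow{S}U_R$ with $U_L\neq U_R$, consisting of an admissible $C$-wave from $U_L$ to $U_M$ followed by an admissible $S$-wave from $U_M$ to $U_R$. This wave sequence is compatible if and only if $U_M\in\mathcal{L}\cup\mathcal{T}$ and $0\le S_R\le S^k(U_M)$.
   Context: System: $\partial_t S+\partial_x f(S,C)=0$, $\partial_t[(S+\mathcal{A})C]+\partial_x[f(S,C)C]=0$, with $\mathcal{A}>0$ constant and states $U=(S,C)\in[0,1]^2$. The flux $f$ satisfies: (a) $f\in\mathscr{C}^2$, $f(0,C)=0$, $f(1,C)=1$, $\partial_Sf(0,C)=\partial_Sf(1,C)=0$; (b) for each $C$, $f(\cdot,C)$ is strictly increasing and S-shaped with a single inflection point (convex then concave); (c) $\partial_Cf>0$ for $0<S<1$. Eigenvalues: $\lambda_C(S,C)=f(S,C)/(S+\mathcal{A})$, $\lambda_S(S,C)=\partial_Sf(S,C)$. Transition curve $\mathcal{T}=\{\lambda_S=\lambda_C\}$, $\mathcal{L}=\{\lambda_S>\lambda_C\}$, $\mathcal{R}=\{\lambda_S<\lambda_C\}$; for each $C$, $\mathcal{T}$ contains exactly one point $(S^*(C),C)$ with $S^*(C)\in(0,1)$. For a state $U=(S,C)$, $S^k(U)$ denotes the value $S'\in[0,1]$, $S'\ne S$, with $\lambda_C(S',C)=\lambda_C(U)$ (it lies on the opposite side of $\mathcal{T}$ from $U$); $S^k(U)=+\infty$ if no such $S'$ exists, and $S^k(U)=S^*(C)$ if $S=S^*(C)$.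 An $S$-wave from $U_1$ to $U_2$ requires $C_1=C_2=C$ and is the solution of the scalar Riemann problem $\partial_tS+\partial_xf(S,C)=0$ with left state $S_1$, right state $S_2$, built from shocks satisfying Oleinik's entropy condition and rarefactions; its initial velocity $v_i$ and final velocity $v_f$ are the smallest and largest propagation speeds in that wave fan. A $C$-wave from $U_1$ to $U_2$ is a contact discontinuity with $\lambda_C(U_1)=\lambda_C(U_2)$, travelling with speed $v_i=v_f=\lambda_C(U_1)$; it is admissible iff $U_1,U_2$ both lie in $\mathcal{L}\cup\mathcal{T}$ or both in $\mathcal{R}\cup\mathcal{T}$. A sequence $U_1\xrightarrow{a}U_2\xrightarrow{b}U_3$ is compatible iff $v_f^a\le v_i^b$ (and a longer sequence is compatible iff each consecutive pair is). *)

From Stdlib Require Import Reals.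
From Coquelicot Require Import Coquelicot.
Open Scope R_scope.

Definition dS (f : R -> R -> R) (s c : R) : R := Derive (fun x => f x c) s.
Definition dC (f : R -> R -> R) (s c : R) : R := Derive (fun y => f s y) c.

Definition C2 (f : R -> R -> R) : Prop :=
  forall s c : R,
    ex_derive (fun x => f x c) s /\ ex_derive (fun y => f s y) c /\
    ex_derive (fun x => dS f x c) s /\ ex_derive (fun y => dS f s y) c /\
    ex_derive (fun x => dC f x c) s /\ ex_derive (fun y => dC f s y) c /\
    continuous (fun p : R * R => f (fst p) (snd p)) (s, c) /\
    continuous (fun p : R * R => dS f (fst p) (snd p)) (s, c) /\
    continuous (fun p : R * R => dC f (fst p) (snd p)) (s, c) /\
    continuous (fun p : R * R => dS (dS f) (fst p) (snd p)) (s, c) /\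
    continuous (fun p : R * R => dC (dS f) (fst p) (snd p)) (s, c) /\
    continuous (fun p : R * R => dS (dC f) (fst p) (snd p)) (s, c) /\
    continuous (fun p : R * R => dC (dC f) (fst p) (snd p)) (s, c).

Definition strictly_convex_on (g : R -> R) (a b : R) : Prop :=
  forall x y t, a <= x -> x < y -> y <= b -> 0 < t < 1 ->
    g (t * x + (1 - t) * y) < t * g x + (1 - t) * g y.

Definition strictly_concave_on (g : R -> R) (a b : R) : Prop :=
  forall x y t, a <= x -> x < y -> y <= b -> 0 < t < 1 ->
    g (t * x + (1 - t) * y) > t * g x + (1 - t) * g y.

Definition lamC (f : R -> R -> R) (A s c : R) : R := f s c / (s + A).
Definition lamS (f : R -> R -> R) (s c : R) : R := dS f s c.

Definition flux_assumptions (f : R -> R -> R) (A : R) : Prop :=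
  0 < A /\
  C2 f /\
  (forall c, 0 <= c <= 1 ->
     f 0 c = 0 /\ f 1 c = 1 /\ dS f 0 c = 0 /\ dS f 1 c = 0) /\
  (forall c, 0 <= c <= 1 ->
     (forall x y, 0 <= x -> x < y -> y <= 1 -> f x c < f y c) /\
     (exists p, 0 < p < 1 /\
        strictly_convex_on (fun x => f x c) 0 p /\
        strictly_concave_on (fun x => f x c) p 1)) /\
  (forall s c, 0 < s < 1 -> 0 <= c <= 1 -> dC f s c > 0) /\
  (* T contains exactly one point (S*(C),C) with S*(C) in (0,1) *)
  (forall c, 0 <= c <= 1 ->
     exists! s, (0 < s < 1) /\ lamS f s c = lamC f A s c).

Definition in_LT (f : R -> R -> R) (A s c : R) : Prop := lamS f s c >= lamC f A s c.
Definition in_RT (f : R -> R -> R) (A s c : R) : Prop := lamS f s c <= lamC f A s c.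

(** "s' <= S^k(U)" for U = (s,c), with S^k(U) = +oo when no partner exists.
    If s = S*(c) (the unique point of T with 0 < s < 1), S^k(U) = s;
    otherwise S^k(U) is the (unique) S' in [0,1], S' <> s, with equal lamC. *)
Definition le_Sk (f : R -> R -> R) (A s c s' : R) : Prop :=
  ((0 < s < 1 /\ lamS f s c = lamC f A s c) -> s' <= s) /\
  (~ (0 < s < 1 /\ lamS f s c = lamC f A s c) ->
     forall S', 0 <= S' <= 1 -> S' <> s -> lamC f A S' c = lamC f A s c -> s' <= S').

Definition admissible_Cwave (f : R -> R -> R) (A s1 c1 s2 c2 : R) : Prop :=
  lamC f A s1 c1 = lamC f A s2 c2 /\
  ((in_LT f A s1 c1 /\ in_LT f A s2 c2) \/ (in_RT f A s1 c1 /\ in_RT f A s2 c2)).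

Definition shock_speed (f : R -> R -> R) (c a b : R) : R := (f b c - f a c) / (b - a).

Definition strictly_between (a s b : R) : Prop := Rmin a b < s < Rmax a b.
Definition weakly_between (a s b : R) : Prop := Rmin a b <= s <= Rmax a b.

Definition oleinik_shock (f : R -> R -> R) (c a b : R) : Prop :=
  a <> b /\
  forall s, strictly_between a s b ->
    (f s c - f a c) / (s - a) >= shock_speed f c a b /\
    shock_speed f c a b >= (f s c - f b c) / (s - b).

Definition rarefaction (f : R -> R -> R) (c a b : R) : Prop :=
  a <> b /\
  forall s t, weakly_between a s b -> weakly_between a t b ->
    (t - s) * (b - a) > 0 -> lamS f s c < lamS f t c.

Definition elem_wave (f : R -> R -> R) (c : R) (shock : bool) (a b : R) : Prop :=
  if shock then oleinik_shock f c a b else rarefaction f c a b.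
Definition elem_vi (f : R -> R -> R) (c : R) (shock : bool) (a b : R) : R :=
  if shock then shock_speed f c a b else lamS f a c.
Definition elem_vf (f : R -> R -> R) (c : R) (shock : bool) (a b : R) : R :=
  if shock then shock_speed f c a b else lamS f b c.

Inductive sfan (f : R -> R -> R) (c : R) : R -> R -> R -> R -> Prop :=
  | sfan_one : forall k a b,
      elem_wave f c k a b ->
      sfan f c a b (elem_vi f c k a b) (elem_vf f c k a b)
  | sfan_cons : forall k a m b vi' vf,
      elem_wave f c k a m -> strictly_between a m b ->
      sfan f c m b vi' vf -> elem_vf f c k a m <= vi' ->
      sfan f c a b (elem_vi f c k a m) vf.

(** S-wave from (a,c) to (b,c): the entropy solution of the scalar Riemann
    problem with left state a and right state b, with its initial (smallest)
    speed vi and final (largest) speed vf.  The trivial wave (a = b) is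
    assigned the characteristic speed lamS(a,c). *)
Inductive swave (f : R -> R -> R) (c : R) : R -> R -> R -> R -> Prop :=
  | swave_trivial : forall a, swave f c a a (lamS f a c) (lamS f a c)
  | swave_fan : forall a b vi vf, a <> b -> sfan f c a b vi vf -> swave f c a b vi vf.

From Stdlib Require Import Reals Lra Psatz.
From Coquelicot Require Import Coquelicot.
Open Scope R_scope.

(* Everything happens on the slice C = C_M, where the C-wave has speed
   lamC(U_L) = lamC(U_M).  The sign of lamS - lamC is the sign of the
      continuous "gap" lamS (S + A) - f, which vanishes in (0,1) only at the
      transition state S*.  Propagating signs (intermediate values) and the
      mean value theorem show that lamC increases on [0,S*] and decreases on
      [S*,1]; hence L ∪ T = {S <= S*} and, for U_M in L ∪ T, the condition
      S_R <= S^k(U_M) says: S_R <= S_M or lamC(S_R) >= lamC(S_M).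
   2. Speeds of S-waves.  The first wave of a fan determines its initial
      speed; a shock is at least as fast as lamC of its left state iff lamC
      moves in the right direction across it; along an increasing fan the
      flux gains at least (initial speed) per unit of S.
   3. Combining 1 and 2 characterises compatibility of the S-wave with the
      speed lamC(U_M), which is then restated in terms of L ∪ T and S^k. *)

Lemma sign_persists (g : R -> R) (a b : R) :
  continuity g -> a <= b -> (forall z, a <= z <= b -> g z <> 0) ->
  (g a < 0 <-> g b < 0).
Proof.
  intros Hg Hab Hnz.
  assert (Hcross : 0 <= g a * g b).
  { destruct (Rle_lt_dec 0 (g a * g b)) as [|Hneg]; [assumption|].
    destruct (IVT_gen g a b 0 Hg) as [z [Hz Hgz]].
    - unfold Rmin, Rmax; destruct (Rle_dec (g a) (g b)); nra.
    - exfalso. apply (Hnz z); [|exact Hgz].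
      revert Hz; unfold Rmin, Rmax; destruct (Rle_dec a b); lra. }
  assert (g a <> 0) by (apply Hnz; lra).
  assert (g b <> 0) by (apply Hnz; lra).
  split; intro; nra.
Qed.

Section Slice.

Variables (f : R -> R -> R) (A c : R).
Hypothesis HA : 0 < A.
Hypothesis Hder : forall s, is_derive (fun x => f x c) s (lamS f s c).

Local Notation lc s := (lamC f A s c).
Local Notation ls s := (lamS f s c).

Lemma flux_of_lamC s : -A < s -> f s c = lc s * (s + A).
Proof. intro Hs. unfold lamC. field. lra. Qed.

Lemma shock_speed_minus_lamC a b : -A < a -> -A < b -> a <> b ->
  shock_speed f c a b - lc a = (lc b - lc a) * ((b + A) / (b - a)).
Proof.
  intros Ha Hb Hab. unfold shock_speed, lamC. field. repeat split; lra.
Qed.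

Lemma lamC_le_shock_up a b : -A < a -> a < b ->
  (lc a <= shock_speed f c a b <-> lc a <= lc b).
Proof.
  intros Ha Hab.
  assert (Hpos : 0 < (b + A) / (b - a)) by (apply Rdiv_lt_0_compat; lra).
  assert (Hid := shock_speed_minus_lamC a b Ha ltac:(lra) ltac:(lra)).
  split; intro; nra.
Qed.

Lemma lamC_le_shock_down a b : -A < b -> b < a ->
  (lc a <= shock_speed f c a b <-> lc b <= lc a).
Proof.
  intros Hb Hba.
  assert (Hneg : (b + A) / (b - a) < 0).
  { unfold Rdiv. apply Rmult_pos_neg; [lra|]. apply Rinv_lt_0_compat. lra. }
  assert (Hid := shock_speed_minus_lamC a b ltac:(lra) Hb ltac:(lra)).
  split; intro; nra.
Qed.

Lemma elem_vi_le_vf k a b :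
  elem_wave f c k a b -> elem_vi f c k a b <= elem_vf f c k a b.
Proof.
  destruct k; simpl; [lra|]. intros [Hab Hincr].
  assert (Hends : weakly_between a a b /\ weakly_between a b b).
  { unfold weakly_between, Rmin, Rmax; destruct (Rle_dec a b); lra. }
  apply Rlt_le, Hincr; try tauto. nra.
Qed.

(* If an elementary wave over an increasing jump starts no slower than lam,
   then the flux gains at least lam per unit of S across it: for a shock this
   is its speed, for a rarefaction the mean value theorem. *)
Lemma elem_flux_gain lam k a b :
  elem_wave f c k a b -> a < b -> lam <= elem_vi f c k a b ->
  lam * (b - a) <= f b c - f a c.
Proof.
  intros Hw Hab Hlam. destruct k; simpl in Hlam.
  - unfold shock_speed in Hlam.
    apply Rmult_le_reg_r with (/ (b - a)); [apply Rinv_0_lt_compat; lra|].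
    rewrite Rmult_assoc, Rinv_r, Rmult_1_r by lra. exact Hlam.
  - destruct Hw as [_ Hincr].
    destruct (MVT_cor2 (fun x => f x c) (fun x => ls x) a b Hab)
      as [z [Hmvt Hz]].
    { intros t _. apply is_derive_Reals, Hder. }
    assert (Hslope : ls a < ls z).
    { apply Hincr; unfold weakly_between, Rmin, Rmax;
        destruct (Rle_dec a b); try lra; nra. }
    rewrite Hmvt. nra.
Qed.

(* The same bound holds across a whole wave fan, since its speeds increase. *)
Lemma fan_flux_gain lam a b vi vf :
  sfan f c a b vi vf -> a < b -> lam <= vi -> lam * (b - a) <= f b c - f a c.
Proof.
  induction 1 as [k a b Hw | k a m b vi' vf Hw Hm Hfan IH Hle]; intros Hab Hlam.
  - exact (elem_flux_gain lam k a b Hw Hab Hlam).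
  - revert Hm; unfold strictly_between, Rmin, Rmax;
      destruct (Rle_dec a b); [intro Hm|lra].
    assert (Hfirst := elem_flux_gain lam k a m Hw ltac:(lra) Hlam).
    assert (Hrest := elem_vi_le_vf k a m Hw).
    assert (Hlast := IH ltac:(lra) ltac:(lra)). lra.
Qed.

Lemma fan_first_wave a b vi vf : sfan f c a b vi vf ->
  exists k m, elem_wave f c k a m /\ vi = elem_vi f c k a m /\
    (a < m <= b \/ b <= m < a).
Proof.
  destruct 1 as [k a b Hw | k a m b vi' vf Hw Hm _ _];
    exists k; [exists b | exists m]; (split; [exact Hw | split; [reflexivity|]]).
  - destruct k; destruct Hw as [Hab _];
      destruct (Rlt_le_dec a b); [left|right|left|right]; lra.
  - revert Hm. unfold strictly_between, Rmin, Rmax.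
    destruct (Rle_dec a b); [left|right]; lra.
Qed.

Section Transition.

Hypothesis Hcont : forall s, continuity_pt (fun x => ls x) s.
Hypothesis Hf0 : f 0 c = 0.
Hypothesis Hpos : forall s, 0 < s <= 1 -> 0 < f s c.
Hypothesis Hslope0 : ls 0 = 0.
Hypothesis Hslope1 : ls 1 = 0.
Variable Ss : R.
Hypothesis HSs : 0 < Ss < 1.
Hypothesis HT : ls Ss = lc Ss.
Hypothesis Huniq : forall s, 0 < s < 1 -> ls s = lc s -> s = Ss.

(* The transition gap (lamS - lamC) * (S + A), written without division so
   that it is continuous on the whole line. *)
Definition gap (s : R) : R := ls s * (s + A) - f s c.

Lemma gap_continuous : continuity gap.
Proof.
  intro s. unfold gap. apply continuity_pt_minus.
  - apply continuity_pt_mult; [apply Hcont|].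
    apply continuity_pt_plus; [apply continuity_pt_id | apply continuity_pt_const].
    intros x y; reflexivity.
  - apply continuity_pt_filterlim.
    apply (@ex_derive_continuous R_AbsRing R_NormedModule (fun x => f x c)).
    exists (ls s). apply Hder.
Qed.

Lemma lamS_minus_lamC s : -A < s -> ls s - lc s = gap s / (s + A).
Proof. intro Hs. unfold gap, lamC. field. lra. Qed.

Lemma gap_zero_at_transition s : 0 < s < 1 -> gap s = 0 -> s = Ss.
Proof.
  intros Hs H0. apply Huniq; [exact Hs|].
  assert (Hd := lamS_minus_lamC s ltac:(lra)). rewrite H0 in Hd.
  unfold Rdiv in Hd. rewrite Rmult_0_l in Hd. lra.
Qed.

Lemma lamC_derivative s : -A < s ->
  derivable_pt_lim (fun x => lc x) s (gap s / (s + A) ^ 2).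
Proof.
  intro Hs. apply is_derive_Reals.
  replace (gap s / (s + A) ^ 2) with ((ls s * (s + A) - f s c * 1) / (s + A) ^ 2)
    by (unfold gap; f_equal; ring).
  apply (is_derive_div (fun x => f x c) (fun x => x + A)); [apply Hder | | lra].
  auto_derive; [trivial | ring].
Qed.

Lemma lamC_lt_of_gap_pos x y : 0 <= x -> x < y ->
  (forall z, x < z < y -> 0 < gap z) -> lc x < lc y.
Proof.
  intros Hx Hxy Hgap.
  destruct (MVT_cor2 (fun s => lc s) (fun s => gap s / (s + A) ^ 2) x y Hxy)
    as [z [Hmvt Hz]].
  { intros t Ht. apply lamC_derivative. lra. }
  assert (0 < gap z / (z + A) ^ 2)
    by (apply Rdiv_lt_0_compat; [apply Hgap, Hz | apply pow_lt; lra]).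
  nra.
Qed.

Lemma lamC_lt_of_gap_neg x y : 0 <= x -> x < y ->
  (forall z, x < z < y -> gap z < 0) -> lc y < lc x.
Proof.
  intros Hx Hxy Hgap.
  destruct (MVT_cor2 (fun s => lc s) (fun s => gap s / (s + A) ^ 2) x y Hxy)
    as [z [Hmvt Hz]].
  { intros t Ht. apply lamC_derivative. lra. }
  assert (gap z / (z + A) ^ 2 < 0).
  { unfold Rdiv. apply Rmult_neg_pos; [apply Hgap, Hz|].
    apply Rinv_0_lt_compat, pow_lt. lra. }
  nra.
Qed.

(* Beyond the transition the gap is negative: it is at S = 1, and it cannot
   vanish on [s, 1]. *)
Lemma gap_neg_right s : Ss < s <= 1 -> gap s < 0.
Proof.
  intro Hs.
  assert (Hgap1 : gap 1 < 0).
  { unfold gap. rewrite Hslope1. assert (0 < f 1 c) by (apply Hpos; lra). lra. }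
  apply (sign_persists gap s 1 gap_continuous ltac:(lra)); [|exact Hgap1].
  intros z Hz H0. destruct (Req_dec z 1) as [->|Hz1]; [lra|].
  assert (z = Ss) by (apply gap_zero_at_transition; [lra | exact H0]). lra.
Qed.

(* Before the transition the gap is positive: otherwise it would be negative
   on all of (0, s], making lamC(s) < lamC(0) = 0, whereas f(s) > 0. *)
Lemma gap_pos_left s : 0 < s < Ss -> 0 < gap s.
Proof.
  intro Hs.
  assert (Hnz : forall z, 0 < z < Ss -> gap z <> 0).
  { intros z Hz H0. assert (z = Ss) by (apply gap_zero_at_transition; [lra | exact H0]).
    lra. }
  destruct (Rlt_le_dec 0 (gap s)) as [|Hle]; [assumption|exfalso].
  assert (Hneg : gap s < 0) by (assert (gap s <> 0) by (apply Hnz; lra); lra).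
  assert (Hlt : lc s < lc 0).
  { apply lamC_lt_of_gap_neg; [lra | lra |]. intros z Hz.
    apply (sign_persists gap z s gap_continuous ltac:(lra)); [|exact Hneg].
    intros t Ht. apply Hnz. lra. }
  assert (0 < lc s) by (apply Rdiv_lt_0_compat; [apply Hpos | ]; lra).
  unfold lamC at 2 in Hlt. rewrite Hf0 in Hlt. unfold Rdiv in Hlt.
  rewrite Rmult_0_l in Hlt. lra.
Qed.

Lemma lamC_increasing x y : 0 <= x -> x < y -> y <= Ss -> lc x < lc y.
Proof.
  intros. apply lamC_lt_of_gap_pos; [lra | lra |].
  intros z Hz. apply gap_pos_left. lra.
Qed.

Lemma lamC_decreasing x y : Ss <= x -> x < y -> y <= 1 -> lc y < lc x.
Proof.
  intros. apply lamC_lt_of_gap_neg; [lra | lra |].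
  intros z Hz. apply gap_neg_right. lra.
Qed.

Lemma in_LT_iff s : 0 <= s <= 1 -> (in_LT f A s c <-> s <= Ss).
Proof.
  intro Hs. unfold in_LT. assert (Hd := lamS_minus_lamC s ltac:(lra)). split.
  - intro Hge. destruct (Rle_dec s Ss) as [|Hgt]; [assumption|exfalso].
    assert (gap s / (s + A) < 0).
    { unfold Rdiv. apply Rmult_neg_pos; [apply gap_neg_right; lra|].
      apply Rinv_0_lt_compat. lra. }
    lra.
  - intro Hle. destruct (Req_dec s 0) as [->|Hs0].
    { unfold lamC. rewrite Hslope0, Hf0. unfold Rdiv. rewrite Rmult_0_l. lra. }
    destruct (Req_dec s Ss) as [->|HsS]; [lra|].
    assert (0 < gap s / (s + A))
      by (apply Rdiv_lt_0_compat; [apply gap_pos_left|]; lra).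
    lra.
Qed.

(* Unimodality makes every superlevel set of lamC on [0,1] an interval. *)
Lemma lamC_superlevel_interval x y z : 0 <= x -> x <= y -> y <= z -> z <= 1 ->
  lc x <= lc z -> lc x <= lc y.
Proof.
  intros Hx Hxy Hyz Hz Hxz. destruct (Rle_dec y Ss) as [HyS|HyS].
  - destruct (Req_dec x y) as [->|Hne]; [lra|].
    apply Rlt_le, lamC_increasing; lra.
  - destruct (Req_dec y z) as [->|Hne]; [assumption|].
    assert (lc z < lc y) by (apply lamC_decreasing; lra). lra.
Qed.

(* Intermediate values of lamC, through the continuous function
   v (S + A) - f(S). *)
Lemma lamC_intermediate x y v : 0 <= x -> x <= y -> lc y <= v <= lc x ->
  exists z, x <= z <= y /\ lc z = v.
Proof.
  intros Hx Hxy Hv.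
  set (g s := v * (s + A) - f s c).
  assert (Hg : continuity g).
  { apply continuity_minus.
    - apply continuity_mult; [apply continuity_const; intros ? ?; reflexivity|].
      apply continuity_plus; [apply derivable_continuous, derivable_id|].
      apply continuity_const. intros ? ?; reflexivity.
    - intro s. apply continuity_pt_filterlim.
      apply (@ex_derive_continuous R_AbsRing R_NormedModule (fun t => f t c)).
      exists (ls s). apply Hder. }
  assert (Hgx : g x <= 0)
    by (unfold g; rewrite (flux_of_lamC x) by lra; nra).
  assert (Hgy : 0 <= g y)
    by (unfold g; rewrite (flux_of_lamC y) by lra; nra).
  destruct (IVT_gen g x y 0 Hg) as [z [Hz Hgz]].
  { unfold Rmin, Rmax. destruct (Rle_dec (g x) (g y)); lra. }
  revert Hz. unfold Rmin, Rmax. destruct (Rle_dec x y) as [_|]; [intro Hz|lra].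
  exists z. split; [exact Hz|].
  unfold g in Hgz. rewrite (flux_of_lamC z) in Hgz by lra.
  apply Rmult_eq_reg_r with (z + A); lra.
Qed.

Lemma on_transition_iff s :
  (0 < s < 1 /\ ls s = lc s) <-> s = Ss.
Proof.
  split; [intros [Hs He]; exact (Huniq s Hs He)|].
  intros ->. split; [exact HSs | exact HT].
Qed.

Lemma le_Sk_iff SM SR : 0 <= SM <= Ss -> 0 <= SR <= 1 ->
  (le_Sk f A SM c SR <-> SR <= SM \/ lc SM <= lc SR).
Proof.
  intros HM HR. unfold le_Sk. rewrite on_transition_iff. split.
  - intros [HkT HkN]. destruct (Rle_dec SR SM) as [|HMR]; [left; assumption|right].
    destruct (Rle_dec (lc SM) (lc SR)) as [|Hlt]; [assumption|exfalso].
    assert (HRS : Ss < SR).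
    { destruct (Rle_dec SR Ss); [|lra].
      assert (lc SM < lc SR) by (apply lamC_increasing; lra). lra. }
    destruct (Req_dec SM Ss) as [HMS|HMS]; [assert (SR <= SM) by auto; lra|].
    assert (lc SM < lc Ss) by (apply lamC_increasing; lra).
    destruct (lamC_intermediate Ss SR (lc SM)) as [z [Hz Hlz]]; [lra | lra | lra |].
    assert (SR <= z) by (apply HkN; [exact HMS | lra | lra | exact Hlz]).
    assert (z = SR) by lra. subst z. lra.
  - intros Hsup. split.
    + intros HMS. subst SM. destruct Hsup as [|Hle]; [assumption|].
      destruct (Rle_dec SR Ss) as [|HgtS]; [assumption|exfalso].
      assert (lc SR < lc Ss) by (apply lamC_decreasing; lra). lra.
    + intros HMS S' HS' Hne Heq.
      assert (HMS' : SM < S').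
      { destruct (Rlt_le_dec SM S') as [|Hle]; [assumption|exfalso].
        assert (lc S' < lc SM) by (apply lamC_increasing; lra). lra. }
      assert (HSS' : Ss < S').
      { destruct (Rlt_le_dec Ss S') as [|Hle]; [assumption|exfalso].
        assert (lc SM < lc S') by (apply lamC_increasing; lra). lra. }
      destruct Hsup as [|Hle]; [lra|].
      destruct (Rle_dec SR S') as [|Hgt]; [assumption|exfalso].
      assert (lc SR < lc S') by (apply lamC_decreasing; lra). lra.
Qed.

Lemma fan_lamC_gain a b vi vf : sfan f c a b vi vf -> 0 <= a -> a < b ->
  lc a <= vi -> lc a <= lc b.
Proof.
  intros Hfan Ha Hab Hlam.
  assert (Hgain := fan_flux_gain (lc a) a b vi vf Hfan Hab Hlam).
  rewrite (flux_of_lamC a), (flux_of_lamC b) in Hgain by lra.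
  apply Rmult_le_reg_r with (b + A); lra.
Qed.

(* Past the transition,
   an increasing fan would contradict the gain lemma, a decreasing shock
   would violate Oleinik's condition against a state between it and the
   transition, and a rarefaction starts at lamS < lamC. *)
Lemma fan_compatible_before_transition a b vi vf :
  0 <= a <= 1 -> 0 <= b <= 1 -> sfan f c a b vi vf -> lc a <= vi -> a <= Ss.
Proof.
  intros Ha Hb Hfan Hlam.
  destruct (fan_first_wave a b vi vf Hfan) as (k & m & Hw & Hvi & Hm).
  destruct k; simpl in Hvi.
  - destruct (Rle_dec a Ss) as [|HaS]; [assumption|exfalso]. destruct Hm as [Hup|Hdown].
    + assert (lc a <= lc b) by (apply (fan_lamC_gain a b vi vf Hfan); lra).
      assert (lc b < lc a) by (apply lamC_decreasing; lra). lra.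
    + destruct Hw as [_ Holeinik].
      set (s := (Rmax m Ss + a) / 2).
      assert (Hs : m <= Rmax m Ss /\ Ss <= Rmax m Ss /\ Rmax m Ss < a)
        by (unfold Rmax; destruct (Rle_dec m Ss); lra).
      assert (Hbtw : strictly_between a s m)
        by (unfold strictly_between, Rmin, Rmax, s; destruct (Rle_dec a m); lra).
      destruct (Holeinik s Hbtw) as [Hchord _].
      change ((f s c - f a c) / (s - a)) with (shock_speed f c a s) in Hchord.
      assert (Hsa : Ss < s < a) by (unfold s; lra).
      assert (lc s <= lc a)
        by (apply (proj1 (lamC_le_shock_down a s ltac:(lra) ltac:(lra))); lra).
      assert (lc a < lc s) by (apply lamC_decreasing; lra). lra.
  - apply in_LT_iff; [exact Ha|]. unfold in_LT. lra.
Qed.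

Lemma fan_compatible_superlevel a b vi vf : sfan f c a b vi vf -> 0 <= a ->
  lc a <= vi -> b <= a \/ lc a <= lc b.
Proof.
  intros Hfan Ha Hlam. destruct (Rle_dec b a) as [|Hab]; [left; assumption|right].
  apply (fan_lamC_gain a b vi vf Hfan); lra.
Qed.

Lemma fan_compatible_of_superlevel a b vi vf : 0 <= a <= Ss -> 0 <= b <= 1 ->
  b <= a \/ lc a <= lc b -> sfan f c a b vi vf -> lc a <= vi.
Proof.
  intros Ha Hb Hsup Hfan.
  destruct (fan_first_wave a b vi vf Hfan) as (k & m & Hw & Hvi & Hm).
  rewrite Hvi. destruct k; simpl.
  - destruct Hm as [Hup|Hdown].
    + apply lamC_le_shock_up; [lra | lra |].
      destruct Hsup as [|Hab]; [lra|].
      apply (lamC_superlevel_interval a m b); lra.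
    + apply lamC_le_shock_down; [lra | lra |].
      apply Rlt_le, lamC_increasing; lra.
  - assert (Hin : in_LT f A a c) by (apply in_LT_iff; lra).
    unfold in_LT in Hin. lra.
Qed.

Lemma swave_compatible_iff a b vi vf : 0 <= a <= 1 -> 0 <= b <= 1 ->
  swave f c a b vi vf -> (lc a <= vi <-> a <= Ss /\ (b <= a \/ lc a <= lc b)).
Proof.
  intros Ha Hb Hsw. destruct Hsw as [a | a b vi vf _ Hfan].
  - rewrite <- in_LT_iff by exact Ha. unfold in_LT.
    split; [intro; split; [lra | left; lra] | intros [? _]; lra].
  - split.
    + intro Hlam. split.
      * exact (fan_compatible_before_transition a b vi vf Ha Hb Hfan Hlam).
      * exact (fan_compatible_superlevel a b vi vf Hfan (proj1 Ha) Hlam).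
    + intros [HaS Hsup]. apply (fan_compatible_of_superlevel a b vi vf); tauto.
Qed.
End Transition.
End Slice.

Lemma C2_slice_regular (f : R -> R -> R) (c : R) : C2 f ->
  (forall s, is_derive (fun x => f x c) s (lamS f s c)) /\
  (forall s, continuity_pt (fun x => lamS f x c) s).
Proof.
  intro HC2. split; intro s; destruct (HC2 s c) as (Hdf & _ & HddS & _).
  - exact (Derive_correct _ _ Hdf).
  - apply continuity_pt_filterlim.
    exact (@ex_derive_continuous R_AbsRing R_NormedModule (fun x => dS f x c) s HddS).
Qed.

Theorem lemma3p1 (f : R -> R -> R) (A : R) (Hf : flux_assumptions f A)
  (SL CL SM CM SR CR vi vf : R)
  (HL : 0 <= SL <= 1 /\ 0 <= CL <= 1)
  (HM : 0 <= SM <= 1 /\ 0 <= CM <= 1)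
  (HR : 0 <= SR <= 1 /\ 0 <= CR <= 1)
  (Hneq : (SL, CL) <> (SR, CR))
  (HCw : admissible_Cwave f A SL CL SM CM)
  (HCR : CR = CM)
  (HSw : swave f CM SM SR vi vf) :
  (* compatibility: final speed of the C-wave <= initial speed of the S-wave *)
  lamC f A SL CL <= vi <->
  (in_LT f A SM CM /\ 0 <= SR /\ le_Sk f A SM CM SR).
Proof.
  destruct Hf as (HA & HC2 & Hends & Hshape & _ & Htrans).
  destruct HM as [HSM HCM].
  destruct (Hends CM HCM) as (Hf0 & _ & Hslope0 & Hslope1).
  destruct (Hshape CM HCM) as [Hinc _].
  destruct (Htrans CM HCM) as [Ss [[HSs HT] Hunique]].
  destruct (C2_slice_regular f CM HC2) as [Hder Hcont].
  assert (Hpos : forall s, 0 < s <= 1 -> 0 < f s CM)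
    by (intros s Hs; rewrite <- Hf0; apply Hinc; lra).
  assert (Huniq : forall s, 0 < s < 1 -> lamS f s CM = lamC f A s CM -> s = Ss)
    by (intros s Hs He; symmetry; apply Hunique; tauto).
  (* The C-wave carries the speed lamC(U_L) = lamC(U_M). *)
  destruct HCw as [HlamLM _]. rewrite HlamLM.
  assert (Hcompat : lamC f A SM CM <= vi <->
                    SM <= Ss /\ (SR <= SM \/ lamC f A SM CM <= lamC f A SR CM))
    by (eapply swave_compatible_iff; eauto; lra).
  assert (HLT : in_LT f A SM CM <-> SM <= Ss) by (eapply in_LT_iff; eauto).
  assert (HSk : SM <= Ss -> (le_Sk f A SM CM SR <->
                             SR <= SM \/ lamC f A SM CM <= lamC f A SR CM))
    by (intro; eapply le_Sk_iff; eauto; lra).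
  rewrite Hcompat, HLT. split.
  - intros [HMS Hsup]. split; [exact HMS | split; [lra | apply HSk; assumption]].
  - intros [HMS [_ Hk]]. split; [exact HMS | apply HSk; assumption].
Qed.
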